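(* Let $s$ be a positive integer, let $\lambda,\eta,n$ be numbers (e.g. reals), and put $c(x)=\lambda x+\eta$. Then $$\sum_{i=0}^{s-1}(-1)^i\binom{s-1}{i}c(n-i)^s+\sum_{i=s+1}^{2s}(-1)^{s+i}\binom{s-1}{2s-i}c(n-i)^s=\lambda^s(s+1)!.$$ *)

From mathcomp Require Import all_boot all_order all_algebra.
Set Implicit Arguments. Unset Strict Implicit. Unset Printing Implicit Defensive.

From mathcomp Require Import all_boot all_order all_algebra.
From mathcomp Require Import ring zify.
Import GRing.Theory.
Local Open Scope ring_scope.

(* With m = s - 1, y = c n and f z = z ^+ s, the first sum is the m-th backward
   difference (step lambda) of f at y, and reindexing the second by
   i = j + s + 1 shows it is minus the same difference at y - (s + 1) lambda.
   Their sum is thus the m-th difference of f z - f (z - (s + 1) lambda),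
   which telescopes into s + 1 shifted s-th differences of f; each equals
   s`! lambda ^+ s, since the s-th difference of z ^+ s is constant. *)

Lemma sum_alt_binS (R : comPzRingType) m (F : nat -> R) :
  \sum_(0 <= i < m.+2) (-1) ^+ i * 'C(m.+1, i)%:R * F i =
  \sum_(0 <= i < m.+1) (-1) ^+ i * 'C(m, i)%:R * (F i - F i.+1).
Proof.
have drop_last : \sum_(0 <= i < m.+2) (-1) ^+ i * 'C(m, i)%:R * F i =
                 \sum_(0 <= i < m.+1) (-1) ^+ i * 'C(m, i)%:R * F i.
  by rewrite big_nat_recr //= bin_small // mulr0 mul0r addr0.
under [RHS]eq_bigr do rewrite mulrBr.
rewrite sumrB -drop_last !(big_nat_recl m.+1) // !bin0.
under eq_bigr do rewrite binS natrD mulrDr mulrDl.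
rewrite big_split /= addrA -sumrN; congr (_ + _).
by apply: eq_bigr => i _; rewrite exprS; ring.
Qed.

Lemma sum_alt_bin_reflect (R : comPzRingType) m (F : nat -> R) :
  \sum_(m.+2 <= i < (2 * m.+1).+1) (-1) ^+ (m.+1 + i) * 'C(m, 2 * m.+1 - i)%:R * F i =
  - \sum_(0 <= i < m.+1) (-1) ^+ i * 'C(m, i)%:R * F (i + m.+2)%N.
Proof.
rewrite -(add0n m.+2) big_addn -sumrN.
have -> : ((2 * m.+1).+1 - m.+2 = m.+1)%N by lia.
apply: eq_big_nat => i /andP[_ lt_i_m1].
have -> : (m.+1 + (i + m.+2) = (i + 2 * m.+1).+1)%N by lia.
have -> : (2 * m.+1 - (i + m.+2) = m - i)%N by lia.
rewrite bin_sub; last by lia.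
by rewrite exprS exprD exprM sqrrN !expr1n mulr1 !mulN1r !mulNr.
Qed.

Section BackwardDifference.

Context {R : comNzRingType} (lam : R).

Definition backdiff (f : R -> R) (y : R) : R := f y - f (y - lam).

Definition backdiffn (m : nat) (f : R -> R) (y : R) : R :=
  \sum_(0 <= i < m.+1) (-1) ^+ i * 'C(m, i)%:R * f (y - i%:R * lam).

Lemma eq_backdiffn m {f g : R -> R} : f =1 g -> backdiffn m f =1 backdiffn m g.
Proof. by move=> eq_fg y; apply: eq_bigr => i _; rewrite eq_fg. Qed.

Lemma backdiffn_sum m (I : Type) (r : seq I) (F : I -> R -> R) y :
  backdiffn m (fun z => \sum_(j <- r) F j z) y = \sum_(j <- r) backdiffn m (F j) y.
Proof. by rewrite /backdiffn; under eq_bigr do rewrite mulr_sumr; exact: exchange_big. Qed.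

Lemma backdiffnZ m a (f : R -> R) y :
  backdiffn m (fun z => a * f z) y = a * backdiffn m f y.
Proof. by rewrite /backdiffn mulr_sumr; apply: eq_bigr => i _; ring. Qed.

Lemma backdiffnB m (f g : R -> R) y :
  backdiffn m (fun z => f z - g z) y = backdiffn m f y - backdiffn m g y.
Proof. by rewrite /backdiffn -sumrB; apply: eq_bigr => i _; ring. Qed.

Lemma backdiffn_shift m a (f : R -> R) y :
  backdiffn m (fun z => f (z - a)) y = backdiffn m f (y - a).
Proof. by apply: eq_bigr => i _; congr (_ * f _); ring. Qed.

Lemma backdiffnS m (f : R -> R) y :
  backdiffn m.+1 f y = backdiffn m (backdiff f) y.
Proof.
rewrite /backdiffn sum_alt_binS; apply: eq_bigr => i _; congr (_ * (_ - f _)).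
by rewrite -natr1; ring.
Qed.

Lemma backdiff_exp k y :
  backdiff (fun z => z ^+ k) y =
  \sum_(j < k) - ((- lam) ^+ (k - j) * 'C(k, j)%:R) * y ^+ j.
Proof.
rewrite /backdiff (addrC y) exprDn big_ord_recr /= subnn binn expr0 mul1r mulr1n.
rewrite opprD addrCA subrr addr0 -sumrN; apply: eq_bigr => j _.
by rewrite -mulr_natr; ring.
Qed.

Lemma backdiffn_exp m k y : (k <= m)%N ->
  backdiffn m (fun z => z ^+ k) y = (k == m)%:R * (m`!%:R * lam ^+ m).
Proof.
elim: m k y => [|m IHm] k y le_k_m.
  by move: le_k_m; rewrite leqn0 => /eqP->; rewrite /backdiffn big_nat1 !expr0 !mul1r.
rewrite backdiffnS (eq_backdiffn _ (backdiff_exp k)) backdiffn_sum.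
under eq_bigr => j _ do rewrite backdiffnZ (IHm j y (leq_trans (ltn_ord j) le_k_m)).
have [->|ne_k_m1] := eqVneq k m.+1.
  rewrite big_ord_recr /= big1 => [|j _]; last by rewrite ltn_eqF ?mul0r ?mulr0.
  by rewrite add0r !eqxx subSnn binSn factS natrM !mul1r expr1 exprS; ring.
rewrite big1 ?mul0r // => j _.
by rewrite ltn_eqF ?mul0r ?mulr0 //; have := ltn_ord j; lia.
Qed.

Lemma backdiff_telescope (f : R -> R) z K :
  f z - f (z - K%:R * lam) = \sum_(0 <= j < K) backdiff f (z - j%:R * lam).
Proof.
have -> : f z = f (z - 0%:R * lam) by rewrite mul0r subr0.
rewrite -opprB -(telescope_sumr (fun j => f (z - j%:R * lam))) // -sumrN.
apply: eq_big_nat => j _; rewrite /backdiff opprB; congr (_ - f _).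
by rewrite -natr1; ring.
Qed.

End BackwardDifference.

Theorem proposition9 (R : realFieldType) (s : nat) (hs : (0 < s)%N)
  (lambda eta n : R) :
  let c := fun x : R => lambda * x + eta in
  \sum_(0 <= i < s) (-1) ^+ i * ('C(s.-1, i))%:R * c (n - i%:R) ^+ s
  + \sum_(s.+1 <= i < (2 * s).+1) (-1) ^+ (s + i) * ('C(s.-1, 2 * s - i))%:R
      * c (n - i%:R) ^+ s
  = lambda ^+ s * (s.+1)`!%:R.
Proof.
move=> c; case: s hs => [//|m] _ /=; rewrite sum_alt_bin_reflect.
set y := lambda * n + eta; pose f (z : R) := z ^+ m.+1.
have c_shift i : c (n - i%:R) = y - i%:R * lambda by rewrite /c /y; ring.
have -> : \sum_(0 <= i < m.+1) (-1) ^+ i * 'C(m, i)%:R * c (n - i%:R) ^+ m.+1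
          = backdiffn lambda m f y.
  by apply: eq_bigr => i _; rewrite c_shift.
have -> : \sum_(0 <= i < m.+1) (-1) ^+ i * 'C(m, i)%:R * c (n - (i + m.+2)%:R) ^+ m.+1
          = backdiffn lambda m f (y - m.+2%:R * lambda).
  by apply: eq_bigr => i _; rewrite c_shift natrD; congr (_ * f _); ring.
rewrite -backdiffn_shift -backdiffnB.
rewrite (eq_backdiffn _ _ (fun z => backdiff_telescope lambda f z m.+2)) backdiffn_sum.
under eq_bigr do rewrite backdiffn_shift -backdiffnS backdiffn_exp // eqxx mul1r.
by rewrite sumr_const_nat subn0 -mulr_natr (factS m.+1) natrM; ring.
Qed.
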